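(* Let $\varepsilon>0$ with $1/\varepsilon$ an integer, let $n$ be a positive integer, and let $I$ be a set of at most $n$ items packed in a horizontal (respectively vertical) container $C$. Then for every integer $k\ge1/\varepsilon$ there is a set $I'\subseteq I$ with $p(I')\ge(1-\varepsilon)p(I)$ that can be packed in a horizontal (respectively vertical) container $C'$ with $w(C')\le w(C)$, $h(C')\le h(C)$, $w(C')\in WIDTHS(I)^{(k)}$ and $h(C')\in HEIGHTS(I)^{(k)}$.
   Context: Items are axis-parallel rectangles with width $w_i$, height $h_i$, profit $p(i)\ge0$; no rotations. A horizontal container is a box in which items are stacked one on top of another (their projections on the $y$-axis have pairwise disjoint interiors); a vertical container is a box in which items are placed side by side (their projections on the $x$-axis have pairwise disjoint interiors). $WIDTHS(I)=\{w_j: j\in I\}$, $HEIGHTS(I)=\{h_j:j\in I\}$. For a finite set $P$ of reals and integer $k\ge0$, $P^{(k)}=\{(p_1+\dots+p_l)+i\,p_{l+1}: p_1,\dots,p_{l+1}\in P,\ 0\le l\le k,\ i\in\{0,1,\dots,n\}\}$. *)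

From Stdlib Require Import Reals List.
Import ListNotations.
Open Scope R_scope.

Inductive orient := Horizontal | Vertical.

Definition sumR {T : Type} (f : T -> R) (l : list T) : R :=
  fold_right (fun j acc => f j + acc) 0 l.

Definition profit {T : Type} (p : T -> R) (I : list T) : R := sumR p I.

(* The items of I (with widths w, heights h) can be packed in a container
   of the given orientation with width W and height H: every item is placed
   (no rotation) inside the box [0,W]x[0,H]; in a horizontal container the
   y-projections of distinct items have pairwise disjoint interiors, in a
   vertical container the x-projections do.  (For positive lengths, the open
   intervals (a,a+s) and (b,b+t) are disjoint iff a+s <= b or b+t <= a.) *)
Definition packed_in {T : Type} (o : orient) (w h : T -> R) (I : list T)
    (W H : R) : Prop :=
  exists x y : T -> R,
    (forall i, In i I ->
       0 <= x i /\ x i + w i <= W /\ 0 <= y i /\ y i + h i <= H) /\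
    (forall i j, In i I -> In j I -> i <> j ->
       match o with
       | Horizontal => y i + h i <= y j \/ y j + h j <= y i
       | Vertical => x i + w i <= x j \/ x j + w j <= x i
       end).

Definition WIDTHS {T : Type} (w : T -> R) (I : list T) (r : R) : Prop :=
  exists j, In j I /\ w j = r.
Definition HEIGHTS {T : Type} (h : T -> R) (I : list T) (r : R) : Prop :=
  exists j, In j I /\ h j = r.

Definition Pk (P : R -> Prop) (k n : nat) (r : R) : Prop :=
  exists (ps : list R) (q : R) (i : nat),
    (length ps <= k)%nat /\ Forall P ps /\ P q /\ (i <= n)%nat /\
    r = fold_right Rplus 0 ps + INR i * q.

(* In a horizontal container only two numbers matter: the widest item, whose
   width is a legal container width (take l = 0, i = 1), and the total height
   of the items.  If there are at most k items, their total height is itself a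
   sum of at most k heights.  Otherwise take the 1/eps tallest items and drop
   the least profitable one, r, which costs at most eps p(I).  The remaining
   items need height  h(tall \ r) + h(rest), and h(rest) is rounded up to a
   multiple i h(r) with i <= |rest| <= n; since every item of the rest is at
   most as tall as r, this exceeds h(rest) by at most h(r), so the rounded
   height still fits in the original container.  Vertical containers are
   horizontal ones with the coordinates exchanged. *)

From Stdlib Require Import Reals List Permutation Lra Lia Wf_nat ClassicalEpsilon.
Import ListNotations.
Open Scope R_scope.

Lemma sumR_app {T} (f : T -> R) l1 l2 :
  sumR f (l1 ++ l2) = sumR f l1 + sumR f l2.
Proof. induction l1; simpl; [lra|]. rewrite IHl1; lra. Qed.

Lemma sumR_perm {T} (f : T -> R) l l' : Permutation l l' -> sumR f l = sumR f l'.
Proof. induction 1; simpl; lra. Qed.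

Lemma sumR_nonneg {T} (f : T -> R) l : (forall x, 0 <= f x) -> 0 <= sumR f l.
Proof. intros H; induction l; simpl; [lra|]. specialize (H a); lra. Qed.

Lemma sumR_ge_const {T} (f : T -> R) c l :
  (forall x, In x l -> c <= f x) -> INR (length l) * c <= sumR f l.
Proof.
  induction l as [|a l IH]; intros H; simpl length; simpl sumR; [simpl; lra|].
  rewrite S_INR.
  assert (c <= f a) by (apply H; left; auto).
  assert (INR (length l) * c <= sumR f l) by (apply IH; intros; apply H; right; auto).
  lra.
Qed.

Lemma fold_right_Rplus_map {T} (f : T -> R) l :
  fold_right Rplus 0 (map f l) = sumR f l.
Proof. induction l; simpl; auto. rewrite IHl; auto. Qed.

Lemma list_argmax {T} (f : T -> R) l :
  l <> [] -> exists x, In x l /\ forall y, In y l -> f y <= f x.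
Proof.
  induction l as [|a l IH]; intros Hne; [congruence|].
  destruct l as [|b l].
  - exists a; split; [left; auto|]. intros y [<-|[]]; lra.
  - destruct IH as [x [Hx Hm]]; [congruence|].
    destruct (Rle_dec (f x) (f a)).
    + exists a; split; [left; auto|].
      intros y [<-|Hy]; [lra|]. specialize (Hm y Hy); lra.
    + exists x; split; [right; auto|]. intros y [<-|Hy]; [lra|auto].
Qed.

Lemma list_argmin {T} (f : T -> R) l :
  l <> [] -> exists x, In x l /\ forall y, In y l -> f x <= f y.
Proof.
  intros H. destruct (list_argmax (fun x => - f x) l H) as [x [Hx Hm]].
  exists x; split; auto. intros y Hy; specialize (Hm y Hy); lra.
Qed.

Lemma Permutation_of_In {T} (e : T) l : In e l -> exists l', Permutation l (e :: l').
Proof.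
  intros He. destruct (in_split _ _ He) as [l1 [l2 ->]].
  exists (l1 ++ l2). apply Permutation_sym, Permutation_middle.
Qed.

Section Stacking.

Context {T : Type} (h : T -> R).

Definition stacked (y : T -> R) (L : list T) (B : R) : Prop :=
  (forall i, In i L -> 0 <= y i /\ y i + h i <= B) /\
  (forall i j, In i L -> In j L -> i <> j ->
     y i + h i <= y j \/ y j + h j <= y i).

Hypothesis h_pos : forall j, 0 < h j.

(* The topmost item sits above all the others, which are therefore stacked
   below its bottom edge. *)
Lemma stacked_sumR_le y L B :
  NoDup L -> 0 <= B -> stacked y L B -> sumR h L <= B.
Proof.
  remember (length L) as N eqn:HN. revert L HN B.
  induction N as [N IH] using lt_wf_ind; intros L HN B HL HB [Hin Hd].
  destruct L as [|a L0]; [simpl; lra|].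
  destruct (list_argmax y (a :: L0)) as [e [He Htop]]; [congruence|].
  destruct (Permutation_of_In e _ He) as [L' HP].
  assert (HL' := Permutation_NoDup HP HL). inversion HL' as [|? ? HeL' HndL']; subst.
  assert (Hin' : forall i, In i L' -> In i (a :: L0))
    by (intros i Hi; apply (Permutation_in _ (Permutation_sym HP)); right; auto).
  assert (Hbelow : sumR h L' <= y e).
  { apply (IH (length L')); auto.
    - rewrite (Permutation_length HP); simpl; lia.
    - apply (Hin e He).
    - split.
      + intros i Hi. destruct (Hin i (Hin' i Hi)) as [Hyi Hti]. split; auto.
        assert (Hie : i <> e) by (intros ->; contradiction).
        destruct (Hd i e (Hin' i Hi) He Hie) as [Hle|Hle]; auto.
        specialize (Htop i (Hin' i Hi)); specialize (h_pos e); lra.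
      + intros i j Hi Hj; apply Hd; auto. }
  rewrite (sumR_perm h _ _ HP); simpl. destruct (Hin e He); lra.
Qed.

Lemma stacked_of_sumR_le L B :
  NoDup L -> sumR h L <= B -> exists y, stacked y L B.
Proof.
  intros HL. revert B. induction HL as [|a L Ha HL IH]; intros B HB.
  - exists (fun _ => 0); split; intros; contradiction.
  - simpl in HB. destruct (IH (sumR h L) (Rle_refl _)) as [y [Hin Hd]].
    assert (Hs0 : 0 <= sumR h L) by (apply sumR_nonneg; intros; apply Rlt_le; auto).
    assert (Ha0 := h_pos a).
    exists (fun i => if excluded_middle_informative (i = a) then sumR h L else y i).
    split.
    + intros i [<-|Hi].
      * destruct (excluded_middle_informative (a = a)); [lra|congruence].
      * destruct (excluded_middle_informative (i = a)) as [->|_]; [contradiction|].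
        specialize (Hin i Hi); lra.
    + intros i j Hi Hj Hij.
      destruct (excluded_middle_informative (i = a)) as [->|Hia];
      destruct (excluded_middle_informative (j = a)) as [->|Hja]; try congruence.
      * destruct Hj as [->|Hj]; [congruence|]. right; specialize (Hin j Hj); lra.
      * destruct Hi as [->|Hi]; [congruence|]. left; specialize (Hin i Hi); lra.
      * destruct Hi as [->|Hi]; [congruence|]. destruct Hj as [->|Hj]; [congruence|].
        auto.
Qed.

End Stacking.

Lemma packed_in_Horizontal_iff {T} (w h : T -> R) L W H :
  packed_in Horizontal w h L W H <->
  (forall i, In i L -> w i <= W) /\ exists y, stacked h y L H.
Proof.
  split.
  - intros [x [y [Hin Hd]]]. split.
    + intros i Hi; destruct (Hin i Hi) as [? [? _]]; lra.
    + exists y; split; auto. intros i Hi; destruct (Hin i Hi) as [_ [_ ?]]; auto.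
  - intros [Hw [y [Hin Hd]]]. exists (fun _ => 0), y. split; auto.
    intros i Hi. specialize (Hw i Hi); specialize (Hin i Hi); repeat split; lra.
Qed.

Lemma packed_in_Vertical_swap {T} (w h : T -> R) L W H :
  packed_in Vertical w h L W H <-> packed_in Horizontal h w L H W.
Proof.
  split; intros [x [y [Hin Hd]]]; exists y, x; split;
    try (intros i Hi; destruct (Hin i Hi) as [? [? [? ?]]]; repeat split; auto);
    intros i j Hi Hj Hij; apply (Hd i j Hi Hj Hij).
Qed.

Lemma Pk_sumR_add_mul {T} (f : T -> R) I L j k n i :
  incl L I -> In j I -> (length L <= k)%nat -> (i <= n)%nat ->
  Pk (HEIGHTS f I) k n (sumR f L + INR i * f j).
Proof.
  intros HLI Hj HLk Hin. exists (map f L), (f j), i.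
  rewrite length_map, fold_right_Rplus_map. repeat split; auto.
  - apply Forall_forall. intros r Hr. apply in_map_iff in Hr.
    destruct Hr as [u [<- Hu]]. exists u; auto.
  - exists j; auto.
Qed.

Lemma sumR_round_up {T} (f : T -> R) (q : R) (B : list T) :
  0 <= q -> (forall b, In b B -> 0 <= f b <= q) ->
  exists i : nat, (i <= length B)%nat /\ sumR f B <= INR i * q <= sumR f B + q.
Proof.
  intros Hq. induction B as [|b B IH]; intros Hb.
  - exists 0%nat; simpl; split; [lia|lra].
  - destruct IH as [i [Hi [H1 H2]]]; [intros; apply Hb; right; auto|].
    specialize (Hb b (or_introl eq_refl)). simpl sumR; simpl length.
    destruct (Rle_dec (f b + sumR f B) (INR i * q)).
    + exists i; split; [lia|lra].
    + exists (S i); split; [lia|]. rewrite S_INR; lra.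
Qed.

Lemma split_tallest {T} (h : T -> R) s (L : list T) : (s <= length L)%nat ->
  exists A B, Permutation L (A ++ B) /\ length A = s /\
    forall a b, In a A -> In b B -> h b <= h a.
Proof.
  revert L. induction s as [|s IH]; intros L Hs.
  - exists [], L; repeat split; [apply Permutation_refl|]. intros a b [].
  - destruct (IH L ltac:(lia)) as [A [B [HP [HA Htall]]]].
    assert (HB : B <> []).
    { intros ->. apply Permutation_length in HP. rewrite length_app in HP; simpl in HP; lia. }
    destruct (list_argmax h B HB) as [e [He Hmax]].
    destruct (Permutation_of_In e B He) as [B' HB'].
    exists (A ++ [e]), B'. repeat split.
    + rewrite <- app_assoc; simpl. now rewrite HP, HB'.
    + rewrite length_app; simpl; lia.
    + intros a b Ha Hb.
      assert (Hb' : In b B) by (apply (Permutation_in _ (Permutation_sym HB')); right; auto).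
      apply in_app_or in Ha. destruct Ha as [Ha|[<-|[]]]; auto.
Qed.

Lemma cheap_tall_item {T} (h p : T -> R) (I : list T) (m : nat) :
  (forall j, 0 <= p j) -> (1 <= m <= length I)%nat ->
  exists r A B, Permutation I (r :: A ++ B) /\ S (length A) = m /\
    (forall b, In b B -> h b <= h r) /\ INR m * p r <= sumR p I.
Proof.
  intros Hp Hm.
  destruct (split_tallest h m I ltac:(lia)) as [A0 [B [HP [HA0 Htall]]]].
  destruct (list_argmin p A0) as [r [Hr Hmin]];
    [intros ->; simpl in HA0; lia|].
  destruct (Permutation_of_In r A0 Hr) as [A HA].
  exists r, A, B. repeat split.
  - now rewrite HP, HA.
  - now rewrite <- HA0, (Permutation_length HA).
  - intros b Hb; apply Htall; auto.
  - rewrite (sumR_perm p _ _ HP), sumR_app, <- HA0.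
    assert (sumR p B >= 0) by (apply Rle_ge, sumR_nonneg; auto).
    assert (INR (length A0) * p r <= sumR p A0) by (apply sumR_ge_const; auto).
    lra.
Qed.

Lemma height_rounding {T} (h p : T -> R) (eps : R) (m k n : nat) (I : list T) :
  (forall j, 0 < h j) -> (forall j, 0 <= p j) ->
  0 < eps -> eps * INR m = 1 -> (m <= k)%nat ->
  NoDup I -> I <> [] -> (length I <= n)%nat ->
  exists I' H', NoDup I' /\ incl I' I /\
    profit p I' >= (1 - eps) * profit p I /\
    sumR h I' <= H' <= sumR h I /\ Pk (HEIGHTS h I) k n H'.
Proof.
  intros Hh Hp Heps Hm Hmk HI HIne HIn.
  assert (HpI : 0 <= profit p I) by (apply sumR_nonneg; auto).
  destruct (Nat.lt_ge_cases (length I) m) as [Hsmall|Hbig].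
  - destruct I as [|j I0]; [congruence|].
    exists (j :: I0), (sumR h (j :: I0)).
    repeat split; auto using incl_refl, Rle_refl.
    + assert (0 <= eps * profit p (j :: I0)) by (apply Rmult_le_pos; lra). lra.
    + replace (sumR h (j :: I0)) with (sumR h (j :: I0) + INR 0 * h j) by (simpl; ring).
      apply Pk_sumR_add_mul; [apply incl_refl|left; auto|lia|lia].
  - assert (Hm1 : (1 <= m)%nat) by (destruct m; [simpl in Hm; lra|lia]).
    destruct (cheap_tall_item h p I m Hp (conj Hm1 Hbig))
      as [r [A [B [HP [HA [Hshort Hcheap]]]]]].
    assert (HrI : In r I) by (apply (Permutation_in _ (Permutation_sym HP)); left; auto).
    assert (HsubI : incl (A ++ B) I)
      by (intros u Hu; apply (Permutation_in _ (Permutation_sym HP)); right; auto).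
    destruct (sumR_round_up h (h r) B) as [i [HiB [Hlo Hhi]]].
    { specialize (Hh r); lra. }
    { intros b Hb; specialize (Hh b); specialize (Hshort b Hb); lra. }
    assert (Hsplit : forall f : T -> R, sumR f I = f r + sumR f A + sumR f B)
      by (intros f; rewrite (sumR_perm f _ _ HP); simpl; rewrite sumR_app; lra).
    exists (A ++ B), (sumR h A + INR i * h r). repeat split.
    + assert (Hnd := Permutation_NoDup HP HI). now inversion Hnd.
    + exact HsubI.
    + assert (Hpr : p r <= eps * profit p I).
      { unfold profit. replace (p r) with (eps * (INR m * p r)) by (rewrite <- Rmult_assoc, Hm; ring).
        apply Rmult_le_compat_l; lra. }
      unfold profit in *. rewrite sumR_app. rewrite (Hsplit p) in *. lra.
    + rewrite sumR_app; lra.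
    + rewrite (Hsplit h); lra.
    + apply Pk_sumR_add_mul; auto.
      * intros u Hu; apply HsubI, in_or_app; auto.
      * lia.
      * apply (Nat.le_trans _ _ _ HiB). rewrite <- HIn, (Permutation_length HP).
        simpl; rewrite length_app; lia.
Qed.

Lemma horizontal_container_rounding {T} (w h p : T -> R) (eps : R) (m k n : nat)
    (I : list T) (WC HC : R) :
  (forall j, 0 < h j) -> (forall j, 0 <= p j) ->
  0 < eps -> eps * INR m = 1 -> (m <= k)%nat -> (0 < n)%nat ->
  NoDup I -> I <> [] -> (length I <= n)%nat ->
  packed_in Horizontal w h I WC HC ->
  exists (I' : list T) (WC' HC' : R),
    NoDup I' /\ incl I' I /\
    profit p I' >= (1 - eps) * profit p I /\
    packed_in Horizontal w h I' WC' HC' /\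
    WC' <= WC /\ HC' <= HC /\
    Pk (WIDTHS w I) k n WC' /\ Pk (HEIGHTS h I) k n HC'.
Proof.
  intros Hh Hp Heps Hm Hmk Hn HI HIne HIn Hpack.
  apply packed_in_Horizontal_iff in Hpack as [Hwidth [y Hstack]].
  assert (HC0 : 0 <= HC).
  { destruct I as [|j I0]; [congruence|].
    destruct (proj1 Hstack j (or_introl eq_refl)). specialize (Hh j); lra. }
  assert (Hheight := stacked_sumR_le h Hh y I HC HI HC0 Hstack).
  destruct (list_argmax w I HIne) as [jw [Hjw Hwidest]].
  destruct (height_rounding h p eps m k n I Hh Hp Heps Hm Hmk HI HIne HIn)
    as [I' [H' [HI' [Hsub [Hprofit [[Hfit Hle] HPk]]]]]].
  exists I', (w jw), H'. repeat split; auto; try lra.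
  - apply packed_in_Horizontal_iff. split.
    + intros i Hi; apply Hwidest, Hsub, Hi.
    + apply stacked_of_sumR_le; auto.
  - replace (w jw) with (sumR w [] + INR 1 * w jw) by (simpl; ring).
    apply Pk_sumR_add_mul; [intros ? []|auto|simpl; lia|lia].
Qed.

Theorem mainTheorem17 (eps : R) (heps : 0 < eps)
  (hinv : exists m : nat, / eps = INR m)
  (n : nat) (hn : (0 < n)%nat)
  (T : Type) (w h p : T -> R)
  (hw : forall j, 0 < w j) (hh : forall j, 0 < h j) (hp : forall j, 0 <= p j)
  (I : list T) (hI : NoDup I) (hIne : I <> nil) (hIn : (length I <= n)%nat)
  (o : orient) (WC HC : R) (hpack : packed_in o w h I WC HC)
  (k : nat) (hk : / eps <= INR k) :
  exists (I' : list T) (WC' HC' : R),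
    NoDup I' /\ incl I' I /\
    profit p I' >= (1 - eps) * profit p I /\
    packed_in o w h I' WC' HC' /\
    WC' <= WC /\ HC' <= HC /\
    Pk (WIDTHS w I) k n WC' /\ Pk (HEIGHTS h I) k n HC'.
Proof.
  destruct hinv as [m Hm].
  assert (Hepsm : eps * INR m = 1) by (rewrite <- Hm; field; lra).
  assert (Hmk : (m <= k)%nat) by (apply INR_le; lra).
  destruct o.
  - exact (horizontal_container_rounding w h p eps m k n I WC HC
             hh hp heps Hepsm Hmk hn hI hIne hIn hpack).
  - apply packed_in_Vertical_swap in hpack.
    destruct (horizontal_container_rounding h w p eps m k n I HC WC
                hw hp heps Hepsm Hmk hn hI hIne hIn hpack)
      as [I' [HC' [WC' [? [? [? [Hpack' [? [? [? ?]]]]]]]]]].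
    exists I', WC', HC'. repeat split; auto.
    now apply packed_in_Vertical_swap.
Qed.
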